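(* Consider algorithm naive-fvs with step 4 replaced by the modified step 4'. For every graph $G$ and integer $k$, every execution path of this algorithm started on $(G,k,\emptyset)$ that leads to a solution satisfies $|F'|\le 2|V_-|$.
   Context: All graphs are finite, simple and undirected; $d_G(v)$ denotes the degree of $v$ in $G$, $G-S$ denotes deletion of a vertex set $S$, and $G[S]$ the induced subgraph. A feedback vertex set of $G$ is a set $V_-\subseteq V(G)$ such that $G-V_-$ is a forest. Algorithm naive-fvs$(G,k,F)$ (with $k$ an integer and $F\subseteq V(G)$ inducing a forest) returns a set of vertices or ``NO'' as follows (all choices among several candidates are arbitrary; degrees are in the current graph $G$): (0) If $k<0$ return NO; if $V(G)=\emptyset$ return $\emptyset$. (1) If some vertex $v$ has degree less than $2$, return naive-fvs$(G-\{v\},k,F\setminus\{v\})$. (2) If some $v\in V(G)\setminus F$ has two neighbors in the same connected component of $G[F]$, let $X=$ naive-fvs$(G-\{v\},k-1,F)$ and return $X\cup\{v\}$ (NO if $X$ is NO). (3) Pick $v\in V(G)\setminus F$ of maximum degree. (4) If $d(v)=2$: set $X=\emptyset$; while $G$ contains a cycle $C$, take any vertex $x$ of $C$ not in $F$, add $x$ to $X$ and delete $x$ from $G$; then return $X$ if $|X|\le k$, else NO. (5) Let $X=$ naive-fvs$(G-\{v\},k-1,F)$; if $X$ is not NO, return $X\cup\{v\}$. (6) Return naive-fvs$(G,k,F\cup\{v\})$. The modified step 4 is: (4') If $d(v)\le 3$, compute a minimum-size set $X\subseteq V(G)\setminus F$ such that $G-X$ is a forest, and return $X$ if $|X|\le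 k$, else NO. An execution path is a sequence of calls $c_0,c_1,\dots,c_t$ where $c_0$ is the call on $(G,k,\emptyset)$; for each $j<t$, $c_{j+1}$ is the recursive call made by $c_j$ in step 1 or step 2, or, if $c_j$ reaches step 5, either the call of step 5 or the call of step 6 (the latter considered even if the algorithm would not actually make it); and $c_t$ terminates in step 0 or step 4' without recursion. It leads to a solution if $c_t$ returns a set (not NO). $V_-$ denotes the set of vertices deleted along the path in step 2, in step 5 (when the path follows the step-5 call), together with the set $X$ returned in step 4' of $c_t$ (if $c_t$ ends there); $F'$ denotes the set of vertices added to $F$ by step 6 (when the path follows the step-6 call). *)

From HB Require Import structures.
From mathcomp Require Import all_boot all_order all_algebra.
Set Implicit Arguments. Unset Strict Implicit. Unset Printing Implicit Defensive.
Import Order.TTheory GRing.Theory Num.Theory.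

(* The "current graph" of a call is
   the induced subgraph G[V] for a vertex set V : {set T}; deleting vertices
   means removing them from V. *)

Definition deg (T : finType) (e : rel T) (V : {set T}) (v : T) : nat :=
  #|[set u in V | e v u]|.

Definition has_cycle (T : finType) (e : rel T) (S : {set T}) : Prop :=
  exists c : seq T, [/\ uniq c, 3 <= size c, all (fun x => x \in S) c & cycle e c].

Definition forest (T : finType) (e : rel T) (S : {set T}) : Prop :=
  ~ has_cycle e S.

Definition adjF (T : finType) (e : rel T) (V F : {set T}) : rel T :=
  fun x y => [&& x \in V :&: F, y \in V :&: F & e x y].

Definition two_nbrs_same_comp (T : finType) (e : rel T) (V F : {set T}) (v : T)
  : Prop :=
  exists u w, [/\ u != w, u \in V :&: F, w \in V :&: F &
                 [/\ e v u, e v w & connect (adjF e V F) u w]].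

(* Neither step 0, 1 nor 2 applies and v is a step-3 choice (maximum degree
   vertex of V \ F). *)
Definition reaches_step3 (T : finType) (e : rel T) (V : {set T}) (k : int)
  (F : {set T}) (v : T) : Prop :=
  [/\ (0 <= k)%R, V != set0,
      (forall u, u \in V -> 2 <= deg e V u) &
    [/\
      (forall u, u \in V :\: F -> ~ two_nbrs_same_comp e V F u),
      v \in V :\: F &
      (forall u, u \in V :\: F -> deg e V u <= deg e V v)]].

(* exec_sol e V k F Vm Fp : there is an execution path of naive-fvs with
   modified step 4', starting with the call on (G[V], k, F), that leads to a
   solution, along which the set V_- is Vm and the set F' is Fp. *)
Inductive exec_sol (T : finType) (e : rel T) :
  {set T} -> int -> {set T} -> {set T} -> {set T} -> Prop :=
| ES_step0 V k F :
    (0 <= k)%R -> V = set0 -> exec_sol e V k F set0 set0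
| ES_step1 V k F v Vm Fp :
    (0 <= k)%R -> V != set0 -> v \in V -> deg e V v < 2 ->
    exec_sol e (V :\ v) k (F :\ v) Vm Fp ->
    exec_sol e V k F Vm Fp
| ES_step2 V k F v Vm Fp :
    (0 <= k)%R -> V != set0 -> (forall u, u \in V -> 2 <= deg e V u) ->
    v \in V :\: F -> two_nbrs_same_comp e V F v ->
    exec_sol e (V :\ v) (k - 1)%R F Vm Fp ->
    exec_sol e V k F (v |: Vm) Fp
| ES_step4 V k F v (X : {set T}) :
    reaches_step3 e V k F v -> deg e V v <= 3 ->
    X \subset V :\: F -> forest e (V :\: X) ->
    (forall Y : {set T}, Y \subset V :\: F -> forest e (V :\: Y) -> #|X| <= #|Y|) ->
    (#|X|%:Z <= k)%R ->
    exec_sol e V k F X set0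
| ES_step5 V k F v Vm Fp :
    reaches_step3 e V k F v -> 3 < deg e V v ->
    exec_sol e (V :\ v) (k - 1)%R F Vm Fp ->
    exec_sol e V k F (v |: Vm) Fp
| ES_step6 V k F v Vm Fp :
    reaches_step3 e V k F v -> 3 < deg e V v ->
    exec_sol e V k (v |: F) Vm Fp ->
    exec_sol e V k F Vm (v |: Fp).

From HB Require Import structures.
From mathcomp Require Import all_boot all_order all_algebra.
From mathcomp Require Import zify.
Set Implicit Arguments. Unset Strict Implicit.

(* Measure a call (G[V], F) by the potential
     Phi(V, F) = sum_{u in F} deg u + sum_{u in V \ F} min (deg u, 2).
   Once the path has branched in step 6, let W >= 4 bound the degrees outside F
   (the degree of the vertex last added to F works, by the choice in step 3).
   The invariant (W - 2)|F'| + Phi <= 2 (W - 2)|V_-| + 2|V| survives every step: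
   step 6 on a vertex of degree d <= W raises Phi by d - 2 and |F'| by one;
   deleting a vertex outside F (steps 2 and 5) lowers Phi by at most 2 + W and
   |V| by one, which 2 (W - 2) pays for since W >= 4; in step 4' the vertices
   of X have degree at most 3 and G - X is a forest, so the degree sum of G is
   at most 2|V| + 4|X|.  Before the first branching F is empty and every
   degree is at least 2, so Phi = 2|V| there, and the invariant for the first
   branching vertex yields |F'| <= 2|V_-|. *)

Section Degrees.

Variables (T : finType) (e : rel T).
Implicit Types V F : {set T}.

Lemma degE V v : deg e V v = \sum_(u in V) (e v u : nat).
Proof.
rewrite /deg -sum1dep_card big_mkcondr /=.
by apply: eq_bigr => u _; case: (e v u).
Qed.

Lemma deg_subset (V1 V2 : {set T}) v : V1 \subset V2 -> deg e V1 v <= deg e V2 v.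
Proof.
move=> sV; apply/subset_leq_card/subsetP => u; rewrite !inE => /andP[uV ->].
by rewrite (subsetP sV).
Qed.

Lemma deg_setD1 V v u : v \in V -> deg e V u = e u v + deg e (V :\ v) u.
Proof.
move=> vV; rewrite !degE (bigD1 v) //=; congr (_ + _).
by apply: eq_bigl => w; rewrite in_setD1 andbC.
Qed.

Definition deg_bounded V F (W : nat) :=
  forall u, u \in V :\: F -> deg e V u <= W.

Lemma deg_bounded_setD1 V F W v :
  deg_bounded V F W -> deg_bounded (V :\ v) (F :\ v) W.
Proof.
move=> hW u; rewrite !inE => /andP[/[swap] /andP[-> uV] /= uF].
by apply: leq_trans (hW u _); [apply/deg_subset/subsetDl | rewrite inE uF uV].
Qed.

Lemma deg_boundedS V (F1 F2 : {set T}) W :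
  F1 \subset F2 -> deg_bounded V F1 W -> deg_bounded V F2 W.
Proof. by move=> sF hW u uV; apply/hW; move: uV; apply/subsetP/setDS. Qed.

End Degrees.

Section Potential.

Variables (T : finType) (e : rel T).
Implicit Types V F : {set T}.

Definition potential_weight V F u :=
  if u \in F then deg e V u else minn (deg e V u) 2.

Definition potential V F := \sum_(u in V) potential_weight V F u.

Lemma potential_weight_le_deg V F u : potential_weight V F u <= deg e V u.
Proof. by rewrite /potential_weight; case: (u \in F); lia. Qed.

Lemma potential_le_sum_deg V F : potential V F <= \sum_(u in V) deg e V u.
Proof. by apply: leq_sum => u _; apply: potential_weight_le_deg. Qed.

Lemma potential_set0 V : potential V set0 <= 2 * #|V|.
Proof.
rewrite mulnC -sum_nat_const; apply: leq_sum => u _.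
by rewrite /potential_weight inE geq_minr.
Qed.

Lemma potential_ge V F :
  (forall u, u \in V -> 2 <= deg e V u) -> 2 * #|V| <= potential V F.
Proof.
move=> hdeg; rewrite mulnC -sum_nat_const; apply: leq_sum => u uV.
by have := hdeg u uV; rewrite /potential_weight; case: (u \in F); lia.
Qed.

Lemma potential_setD1F V F v : potential (V :\ v) (F :\ v) = potential (V :\ v) F.
Proof.
apply: eq_bigr => u; rewrite in_setD1 => /andP[uv _].
by rewrite /potential_weight in_setD1 uv.
Qed.

Hypothesis e_sym : symmetric e.

Lemma potential_setD1 V F v : v \in V ->
  potential V F <= potential_weight V F v + deg e V v + potential (V :\ v) F.
Proof.
move=> vV; rewrite /potential (bigD1 v) //= -addnA leq_add2l.
have -> : \sum_(u in V | u != v) potential_weight V F u =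
          \sum_(u in V :\ v) potential_weight V F u.
  by apply: eq_bigl => w; rewrite in_setD1 andbC.
apply: (@leq_trans (\sum_(u in V :\ v) (e v u + potential_weight (V :\ v) F u))).
  apply: leq_sum => u _; rewrite /potential_weight (deg_setD1 e u vV) (e_sym v u).
  by case: (u \in F); lia.
by rewrite big_split /= leq_add2r -degE; apply/deg_subset/subsetDl.
Qed.

Lemma potential_setU1 V F v : v \in V -> v \notin F -> 2 <= deg e V v ->
  potential V (v |: F) + 2 = potential V F + deg e V v.
Proof.
move=> vV vF d2; rewrite /potential (bigD1 v) //= [in RHS](bigD1 v) //=.
rewrite /potential_weight setU11 (negbTE vF).
have -> : \sum_(u in V | u != v) (if u \in v |: F then deg e V u else minn (deg e V u) 2)
        = \sum_(u in V | u != v) (if u \in F then deg e V u else minn (deg e V u) 2).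
  by apply: eq_bigr => u /andP[_ uv]; rewrite in_setU1 (negbTE uv).
lia.
Qed.

End Potential.

Section Forests.

Variables (T : finType) (e : rel T).
Implicit Types S V X Y Z : {set T}.
Hypotheses (e_sym : symmetric e) (e_irr : irreflexive e).

Lemma size_le_card S (s : seq T) :
  uniq s -> all (mem S) s -> size s <= #|S|.
Proof.
move=> us /allP sS; rewrite -(card_uniqP us); apply/subset_leq_card/subsetP => x.
exact: sS.
Qed.

(* A simple path ending at x cannot be extended at x only if two neighbours
   of x lie on it; the farther one closes a cycle through x. *)
Lemma has_cycle_or_extend S x p :
  (forall u, u \in S -> 2 <= deg e S u) ->
  uniq (x :: p) -> all (mem S) (x :: p) -> path e x p ->
  has_cycle e S \/ exists2 y, y \in S & e y x && (y \notin x :: p).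
Proof.
move=> hdeg u a pa; set A := [set y in S | e x y].
have xS : x \in S by case/andP: a.
have A2 : 2 <= #|A| by exact: hdeg.
case: (pickP (fun y => (y \in A) && (y \notin x :: p))) => [y /andP[] | noA].
  by rewrite inE e_sym => /andP[yS eyx] ynp; right; exists y; rewrite ?eyx.
left; have Ap : {subset A <= p}.
  move=> y yA; have := noA y; rewrite yA /= in_cons => /negbFE /orP[/eqP yx|//].
  by move: yA; rewrite yx inE e_irr andbF.
clear noA; case: p u a pa Ap => [|h p'] u a pa Ap.
  by move: A2; case: (set_0Vmem A) => [->|[y /Ap]]; rewrite ?cards0.
have [w] : exists w, w \in A :\ h.
  by apply/set0Pn; rewrite -card_gt0 (cardsD1 h A) in A2 *; case: (h \in A) A2; lia.
rewrite in_setD1 => /andP[wh wA].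
have wp : w \in p' by have := Ap w wA; rewrite in_cons (negbTE wh).
move: u a pa; case/path.splitP: wp => p1 p2 u a pa.
have catE : [:: x, h & rcons p1 w ++ p2] = [:: x, h & rcons p1 w] ++ p2 by [].
move: wA; rewrite inE => /andP[wS exw].
exists [:: x, h & rcons p1 w]; split.
- by move: u; rewrite catE cat_uniq => /andP[].
- by rewrite /= size_rcons.
- by move: a; rewrite catE all_cat => /andP[].
- rewrite /cycle /= rcons_path last_rcons (e_sym w x) exw andbT.
  by move: pa; rewrite -cat_cons cat_path => /andP[].
Qed.

Lemma has_cycle_mindeg S :
  S != set0 -> (forall u, u \in S -> 2 <= deg e S u) -> has_cycle e S.
Proof.
case/set0Pn=> x0 x0S hdeg.
suff grow n x p : #|S| < n + size (x :: p) -> uniq (x :: p) ->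
    all (mem S) (x :: p) -> path e x p -> has_cycle e S.
  by apply: (grow #|S| x0 [::]) => //=; rewrite ?x0S //; lia.
elim: n x p => [|n IH] x p lt u a pa.
  by have := size_le_card u a; move: lt => /=; lia.
have [//|[y yS /andP[eyx ynp]]] := has_cycle_or_extend hdeg u a pa.
apply: (IH y (x :: p)); first by move: lt => /=; lia.
- by rewrite cons_uniq ynp u.
- by rewrite /= yS.
- by rewrite /= eyx.
Qed.

Lemma forestS Y Z : Y \subset Z -> forest e Z -> forest e Y.
Proof.
move=> sYZ fZ [c [u s a cy]]; apply: fZ; exists c; split => //.
by apply/allP => x /(allP a) /(subsetP sYZ).
Qed.

(* Remove a vertex of degree at most one and recurse. *)
Lemma forest_sum_deg Y : forest e Y -> \sum_(u in Y) deg e Y u <= 2 * #|Y|.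
Proof.
move: {2}#|Y| (leqnn #|Y|) => n; elim: n Y => [|n IH] Y.
  by rewrite leqn0 cards_eq0 => /eqP -> _; rewrite big_set0.
move=> cY fY.
case: (pickP (fun y => (y \in Y) && (deg e Y y < 2))) => [y /andP[yY dy] | hno]; last first.
  have [->|Yn0] := eqVneq Y set0; first by rewrite big_set0.
  case: fY; apply: has_cycle_mindeg => // u uY.
  by have := hno u; rewrite uY /=; case: ltnP.
have cY1 : #|Y| = 1 + #|Y :\ y| by rewrite (cardsD1 y Y) yY.
have IHy := IH (Y :\ y) ltac:(lia) (forestS (subsetDl _ _) fY).
rewrite (bigD1 y) //=.
have -> : \sum_(u in Y | u != y) deg e Y u = \sum_(u in Y :\ y) (e y u + deg e (Y :\ y) u).
  by apply: eq_big => [w|w _]; rewrite ?in_setD1 1?andbC ?(deg_setD1 e w yY) ?(e_sym w y).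
rewrite big_split /= -degE.
have : deg e (Y :\ y) y <= deg e Y y by apply/deg_subset/subsetDl.
lia.
Qed.

Lemma sum_deg_fvs V X :
  X \subset V -> (forall x, x \in X -> deg e V x <= 3) -> forest e (V :\: X) ->
  \sum_(u in V) deg e V u <= 2 * #|V| + 4 * #|X|.
Proof.
move=> sXV hX fVX.
have cV : #|V| = #|X| + #|V :\: X| by rewrite -(cardsID X V) (setIidPr sXV).
rewrite (big_setID X) /= (setIidPr sXV).
have sumX : \sum_(u in X) deg e V u <= 3 * #|X|.
  by rewrite mulnC -sum_nat_const; exact: leq_sum.
have splitD : \sum_(u in V :\: X) deg e V u =
    \sum_(u in V :\: X) deg e X u + \sum_(u in V :\: X) deg e (V :\: X) u.
  rewrite -big_split /=; apply: eq_bigr => u _.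
  by rewrite !degE (big_setID X) /= (setIidPr sXV).
have crossE : \sum_(u in V :\: X) deg e X u = \sum_(x in X) deg e (V :\: X) x.
  under eq_bigr do rewrite degE.
  rewrite exchange_big /=; apply: eq_bigr => x _; rewrite degE.
  by apply: eq_bigr => u _; rewrite e_sym.
have crossX : \sum_(x in X) deg e (V :\: X) x <= \sum_(x in X) deg e V x.
  by apply: leq_sum => x _; apply/deg_subset/subsetDl.
have := forest_sum_deg fVX.
lia.
Qed.

End Forests.

Lemma leq_scale_addr (a b x y r : nat) :
  0 < a -> a <= b -> a * x + r <= a * y -> b * x + r <= b * y.
Proof. by move=> a0 ab h; rewrite -(leq_pmul2l a0); nia. Qed.

Section ExecutionPaths.

Variables (T : finType) (e : rel T).
Implicit Types V F X Vm Fp : {set T}.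
Hypotheses (e_sym : symmetric e) (e_irr : irreflexive e).

Lemma exec_sol_Vm_subset V k F Vm Fp : exec_sol e V k F Vm Fp -> Vm \subset V.
Proof.
have sD1 v (A B : {set T}) : A \subset B :\ v -> A \subset B.
  by move/subset_trans; apply; apply: subsetDl.
elim=> {V k F Vm Fp} //.
- by move=> *; apply: sub0set.
- by move=> V k F v Vm Fp _ _ _ _ _ /sD1.
- by move=> V k F v Vm Fp _ _ _ /setDP[vV _] _ _ /sD1; rewrite subUset sub1set vV.
- by move=> V k F v X _ _ sX *; apply: subset_trans sX (subsetDl _ _).
- by move=> V k F v Vm Fp [_ _ _ [_ /setDP[vV _] _]] _ _ /sD1; rewrite subUset sub1set vV.
Qed.

Lemma exec_sol_setD1_notin V k F Vm Fp v :
  exec_sol e (V :\ v) k F Vm Fp -> v \notin Vm.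
Proof.
by move=> /exec_sol_Vm_subset sVm; apply/negP => /(subsetP sVm); rewrite setD11.
Qed.

Definition charge_invariant W V F Vm Fp :=
  (W - 2) * #|Fp| + potential e V F <= 2 * (W - 2) * #|Vm| + 2 * #|V|.

Lemma charge_prune W V F v Vm Fp : v \in V -> deg e V v < 2 ->
  charge_invariant W (V :\ v) (F :\ v) Vm Fp -> charge_invariant W V F Vm Fp.
Proof.
rewrite /charge_invariant potential_setD1F => vV dv IH.
have := potential_setD1 e_sym F vV.
have := potential_weight_le_deg e V F v.
have : #|V| = 1 + #|V :\ v| by rewrite (cardsD1 v V) vV.
lia.
Qed.

Lemma charge_delete W V F v Vm Fp : 4 <= W -> v \in V :\: F -> deg e V v <= W ->
  v \notin Vm -> charge_invariant W (V :\ v) F Vm Fp ->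
  charge_invariant W V F (v |: Vm) Fp.
Proof.
rewrite /charge_invariant => W4 /setDP[vV vF] dv vVm IH.
have := potential_setD1 e_sym F vV.
have : potential_weight e V F v <= 2 by rewrite /potential_weight (negbTE vF) geq_minr.
have : #|V| = 1 + #|V :\ v| by rewrite (cardsD1 v V) vV.
rewrite cardsU1 vVm; nia.
Qed.

Lemma charge_terminal W V F X : 4 <= W -> X \subset V ->
  (forall x, x \in X -> deg e V x <= 3) -> forest e (V :\: X) ->
  charge_invariant W V F X set0.
Proof.
rewrite /charge_invariant cards0 => W4 sXV hX fVX.
have := sum_deg_fvs e_sym e_irr sXV hX fVX.
have := potential_le_sum_deg e V F.
nia.
Qed.

Lemma charge_branch W V F v Vm Fp :
  (forall u, u \in V -> 2 <= deg e V u) -> v \in V :\: F ->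
  4 <= deg e V v <= W ->
  charge_invariant (deg e V v) V (v |: F) Vm Fp ->
  charge_invariant W V F Vm (v |: Fp).
Proof.
rewrite /charge_invariant => hdeg /setDP[vV vF] /andP[d4 dW].
set d := deg e V v => IH.
have hU := potential_setU1 vV vF (hdeg v vV).
have hge := potential_ge F hdeg.
have charge_d : (d - 2) * (#|Fp| + 1) + (potential e V F - 2 * #|V|)
    <= (d - 2) * (2 * #|Vm|) by nia.
have charge_W := leq_scale_addr (ltac:(lia) : 0 < d - 2) (leq_sub2r 2 dW) charge_d.
have cF : #|v |: Fp| <= #|Fp| + 1 by rewrite cardsU1 addnC leq_add2l leq_b1.
nia.
Qed.

Lemma exec_sol_charge V k F Vm Fp : exec_sol e V k F Vm Fp ->
  forall W, 4 <= W -> deg_bounded e V F W -> charge_invariant W V F Vm Fp.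
Proof.
elim=> {V k F Vm Fp}.
- by move=> V k F _ -> W _ _; rewrite /charge_invariant /potential big_set0 cards0; lia.
- move=> V k F v Vm Fp _ _ vV dv _ IH W W4 hW.
  exact: charge_prune vV dv (IH W W4 (deg_bounded_setD1 (v := v) hW)).
- move=> V k F v Vm Fp _ _ _ vVF _ ex IH W W4 hW.
  exact: charge_delete W4 vVF (hW v vVF) (exec_sol_setD1_notin ex)
    (IH W W4 (deg_boundedS (subsetDl _ _) (deg_bounded_setD1 (v := v) hW))).
- move=> V k F v X [_ _ _ [_ _ hmax]] d3 sX fVX _ _ W W4 _.
  apply: charge_terminal fVX => //; first by apply: subset_trans sX (subsetDl _ _).
  by move=> x /(subsetP sX) /hmax /leq_trans; apply.
- move=> V k F v Vm Fp [_ _ _ [_ vVF _]] _ ex IH W W4 hW.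
  exact: charge_delete W4 vVF (hW v vVF) (exec_sol_setD1_notin ex)
    (IH W W4 (deg_boundedS (subsetDl _ _) (deg_bounded_setD1 (v := v) hW))).
- move=> V k F v Vm Fp [_ _ hdeg [_ vVF hmax]] d4 _ IH W W4 hW.
  apply: (charge_branch hdeg vVF _ (IH _ d4 (deg_boundedS (subsetUr _ _) hmax))).
  by rewrite d4 (hW v vVF).
Qed.

Lemma exec_sol_unbranched V k Vm Fp :
  exec_sol e V k set0 Vm Fp -> #|Fp| <= 2 * #|Vm|.
Proof.
move Fdef : set0 => F ex; elim: ex Fdef => {V k F Vm Fp}.
- by move=> *; rewrite cards0.
- by move=> V k F v Vm Fp _ _ _ _ _ IH F0; apply: IH; rewrite -F0 set0D.
- by move=> V k F v Vm Fp _ _ _ _ _ _ IH /IH; rewrite cardsU1; lia.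
- by move=> *; rewrite cards0.
- by move=> V k F v Vm Fp _ _ _ IH /IH; rewrite cardsU1; lia.
move=> V k F v Vm Fp [_ _ hdeg [_ vVF hmax]] d4 ex _ F0.
have : charge_invariant (deg e V v) V F Vm (v |: Fp).
  apply: (charge_branch hdeg vVF); first by rewrite d4 leqnn.
  exact: (exec_sol_charge ex d4 (deg_boundedS (subsetUr _ _) hmax)).
rewrite /charge_invariant -F0 => charge.
have hle := potential_set0 e V; have hge := potential_ge set0 hdeg.
have cF : #|Fp| <= #|v |: Fp| by apply/subset_leq_card/subsetUr.
have : (deg e V v - 2) * #|v |: Fp| <= (deg e V v - 2) * (2 * #|Vm|) by nia.
by rewrite leq_pmul2l ?subn_gt0 ?(ltn_trans _ d4) // => /(leq_trans cF).
Qed.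

End ExecutionPaths.

Theorem mainTheorem8 (T : finType) (e : rel T)
  (e_sym : symmetric e) (e_irr : irreflexive e)
  (k : int) (Vm Fp : {set T}) :
  exec_sol e [set: T] k set0 Vm Fp -> #|Fp| <= 2 * #|Vm|.
Proof. exact: exec_sol_unbranched. Qed.
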